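(* Let $n,f$ be positive integers such that $2^{f/2}=O(n)$. Any $f$-FDO with an arbitrary finite stretch for $n$-vertex directed graphs requires $\Omega(2^{f/2}\, n)$ bits of space, regardless of the query time.
   Context: For a directed graph $G=(V,E)$ and $F\subseteq E$, $G-F$ is $G$ with the edges of $F$ removed; $\mathrm{diam}(H)=\max_{s,t} d_H(s,t)$, which is $+\infty$ if $H$ is not strongly connected. An $f$-FDO ($f$-edge fault-tolerant diameter oracle) for $G$ is a data structure built from $G$ that, on query a set $F\subseteq E$ with $|F|\le f$, returns a value $\widehat{D}(F)$; it has stretch $\sigma\ge 1$ if always $\mathrm{diam}(G-F)\le \widehat{D}(F)\le \sigma\cdot \mathrm{diam}(G-F)$. A finite stretch $\sigma$ in particular forces $\widehat D(F)=+\infty$ exactly when $\mathrm{diam}(G-F)=+\infty$. *)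

From mathcomp Require Import all_boot all_order all_algebra.
Set Implicit Arguments. Unset Strict Implicit. Unset Printing Implicit Defensive.
Import Order.TTheory GRing.Theory Num.Theory.
Local Open Scope ring_scope.

Definition edgeset (n : nat) := {set 'I_n * 'I_n}.

Definition loopless n (E : edgeset n) : Prop := forall x, (x, x) \notin E.

Definition erel n (E : edgeset n) : rel 'I_n := fun x y => (x, y) \in E.

Definition walk_in {T : eqType} (e : rel T) (k : nat) (s t : T) : Prop :=
  exists p : seq T, [/\ path e s p, last s p = t & size p = k].

Definition dist_is {T : eqType} (e : rel T) (s t : T) (d : nat) : Prop :=
  walk_in e d s t /\ forall k, walk_in e k s t -> (d <= k)%N.

Definition strongly_connected {T : eqType} (e : rel T) : Prop :=
  forall s t, exists k, walk_in e k s t.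

Definition diam_is {T : eqType} (e : rel T) (D : nat) : Prop :=
  (exists s t, dist_is e s t D) /\ (forall s t d, dist_is e s t d -> (d <= D)%N).

(* Dhat is a sigma-approximation of diam(H), where None encodes +infinity *)
Definition stretch_ok (R : realFieldType) (sigma : R) {T : eqType} (e : rel T)
    (Dhat : option R) : Prop :=
  (~ strongly_connected e -> Dhat = None) /\
  (strongly_connected e -> exists x, Dhat = Some x /\
     forall D, diam_is e D -> (D%:R <= x) && (x <= sigma * D%:R)).

(* An f-FDO for n-vertex (simple) digraphs: the stored data structure is the
   bit string enc E, queries are answered by an arbitrary function q of the
   stored bits and the fault set F (so query time is irrelevant). *)
Definition is_FDO (R : realFieldType) (n f : nat) (sigma : R)
    (enc : edgeset n -> seq bool) (q : seq bool -> edgeset n -> option R) : Prop :=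
  forall E : edgeset n, loopless E ->
  forall F : edgeset n, F \subset E -> (#|F| <= f)%N ->
    stretch_ok sigma (erel (E :\: F)) (q (enc E) F).

From mathcomp Require Import all_boot all_order all_algebra.
From mathcomp Require Import zify lra.
Import Order.TTheory GRing.Theory Num.Theory.

Set Implicit Arguments. Unset Strict Implicit. Unset Printing Implicit Defensive.

(* Choose k with 2k+1 <= f and 2^(k+3) <= n and cut the vertices into
   B = n / 2^(k+3) blocks.  Each block carries two complete binary trees of
   height k: a "down" tree with edges pointing away from its root and an "up"
   tree with edges pointing towards its root.  A hub is reached from every
   vertex; it points to every down root and every up leaf, and each up root
   points to its whole block.  An arbitrary subset of the B * 4^k triples
   (b, l, v) is stored as edges from down leaf l to up leaf v of block b.
   Failing the hub edge into v, the k down edges leaving the root-to-l path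
   and the k up edges entering the v-to-root path, the up root of block b can
   only be reached from the hub through l -> v.  So the faulty graph is
   strongly connected iff (b, l, v) is stored, which an oracle with finite
   stretch must report; hence its memory determines the stored subset and
   some graph needs B * 4^k / 2 bits.  Either 2^k is about 2^(f/2), or 2^k is
   about n >= 2^(f/2) / C; in both cases this is Omega(2^(f/2) n). *)

Section HeapTree.
Variable k : nat.

Definition heap_leaf x := 2 ^ k <= x < 2 ^ k.+1.
Definition heap_anc a x := [exists j : 'I_k.+1, a == x %/ 2 ^ j].
Definition sibling a := if odd a then a.-1 else a.+1.

Lemma divn_exp2S x j : x %/ 2 ^ j.+1 = x %/ 2 ^ j %/ 2.
Proof. by rewrite expnSr divnMA. Qed.

Lemma heap_anc_div x j : j <= k -> heap_anc (x %/ 2 ^ j) x.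
Proof. by move=> hj; apply/existsP; exists (Ordinal (hj : j < k.+1)). Qed.

Lemma heap_anc_refl x : heap_anc x x.
Proof. by rewrite -{1}[x]divn1 -(expn0 2) heap_anc_div. Qed.

Lemma heap_leaf_pow2 : heap_leaf (2 ^ k).
Proof. by rewrite /heap_leaf leqnn /= ltn_exp2l. Qed.

Lemma heap_leafD i : i < 2 ^ k -> heap_leaf (2 ^ k + i).
Proof. by move=> ik; rewrite /heap_leaf leq_addr expnS mul2n -addnn ltn_add2l. Qed.

Lemma heap_leaf_divn_range x j : heap_leaf x -> j <= k -> 0 < x %/ 2 ^ j < 2 ^ k.+1.
Proof.
case/andP=> lo hi hj; rewrite divn_gt0 ?expn_gt0 //.
by rewrite (leq_trans _ lo) ?leq_exp2l // (leq_ltn_trans (leq_div _ _)).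
Qed.

Lemma heap_leaf_root x : heap_leaf x -> x %/ 2 ^ k = 1.
Proof.
case/andP=> lo hi; apply/eqP; rewrite eqn_leq divn_gt0 ?expn_gt0 // lo andbT.
by rewrite -ltnS ltn_divLR ?expn_gt0 // -expnS.
Qed.

Lemma heap_anc_root x : heap_leaf x -> heap_anc 1 x.
Proof. by move=> hx; rewrite -(heap_leaf_root hx) heap_anc_div. Qed.

Lemma heap_anc_leaf a x : heap_leaf x -> heap_leaf a -> heap_anc a x -> a = x.
Proof.
case/andP=> _ hi /andP[lo _] /existsP[[[|j] hj] /= /eqP ha]; first by rewrite ha divn1.
move: lo; rewrite ha divn_exp2S leqNgt => /negP[].
by rewrite ltn_divLR // -expnSr (leq_ltn_trans (leq_div _ _)).
Qed.

Lemma heap_anc_exit x c : heap_leaf x -> 0 < c < 2 ^ k.+1 ->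
  heap_anc (c %/ 2) x -> ~~ heap_anc c x -> exists2 i, i < k & c = sibling (x %/ 2 ^ i).
Proof.
move=> /andP[lo _] /andP[c0 c1] /existsP[[[|i] hi] /eqP /= hc] hn.
  move: lo; rewrite divn1 in hc; rewrite -hc leqNgt => /negP[].
  by rewrite ltn_divLR // -expnSr.
exists i => //; have {}hn : c != x %/ 2 ^ i.
  by apply: contra hn => /eqP ->; rewrite heap_anc_div // ltnW.
move: hc hn; rewrite divn_exp2S /sibling; set a := x %/ 2 ^ i.
case: ifP => odd_c; lia.
Qed.

End HeapTree.

Lemma walk_in_closed (T : eqType) (e : rel T) (W : pred T) :
  (forall x y, e x y -> W y -> W x) -> forall n s t, walk_in e n s t -> W t -> W s.
Proof.
move=> closed n s t [p [hp <- _]]; elim: p s hp => [//|y p IH] s /= /andP[sy hp] Wt.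
exact: closed sy (IH y hp Wt).
Qed.

Lemma strongly_connected_hub (T : finType) (e : rel T) (h : T) :
  (forall x, connect e x h /\ connect e h x) -> strongly_connected e.
Proof.
move=> hub s t; have /connectP[p hp ->] := connect_trans (hub s).1 (hub t).2.
by exists (size p), p.
Qed.

Lemma FDO_separates (R : realFieldType) n f (sigma : R) enc q (E1 E2 F : edgeset n) :
  is_FDO f sigma enc q -> loopless E1 -> loopless E2 -> F \subset E1 -> F \subset E2 ->
  #|F| <= f -> strongly_connected (erel (E1 :\: F)) ->
  ~ strongly_connected (erel (E2 :\: F)) -> enc E1 <> enc E2.
Proof.
move=> fdo loop1 loop2 sub1 sub2 cardF sc1 nsc2 enc12.
have [_ /(_ sc1) [x [qx _]]] := fdo E1 loop1 F sub1 cardF.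
have [/(_ nsc2) qn _] := fdo E2 loop2 F sub2 cardF.
by move: qx; rewrite enc12 qn.
Qed.

Lemma card_le_exp3_of_code (T : finType) (phi : T -> seq bool) L :
  injective phi -> (forall x, size (phi x) <= L) -> #|T| <= 3 ^ L.
Proof.
move=> inj_phi szL; pose pad x := [ffun i : 'I_L => onth (phi x) i].
suff inj_pad : injective pad.
  by have := leq_card pad inj_pad; rewrite card_ffun card_option card_bool card_ord.
move=> x y /ffunP pad_xy; apply/inj_phi/eq_from_onth_le => i i_max.
have iL : i < L by apply: leq_trans i_max _; rewrite geq_max !szL.
by have := pad_xy (Ordinal iL); rewrite !ffunE.
Qed.

Lemma exists_long_code (T : finType) (phi : {set T} -> seq bool) :
  injective phi -> exists A, #|T| <= 2 * size (phi A).
Proof.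
move=> inj_phi; have [A _ maxA] := @arg_maxnP _ set0 xpredT (fun A => size (phi A)) isT.
exists A; have exp3_le_exp4 n : 3 ^ n <= 2 ^ (2 * n).
  by rewrite expnM; case: n => // n; rewrite leq_exp2r.
have := card_le_exp3_of_code inj_phi (fun B => maxA B isT).
rewrite -cardsT -powersetT card_powerset cardsT => /leq_trans/(_ (exp3_le_exp4 _)).
by rewrite leq_exp2l.
Qed.

Inductive node := Hub | Down of nat & nat | Up of nat & nat | Other.

Section Construction.
Variables (k B m : nat).
Local Notation H := (2 ^ k.+1).

(* Trees use heap numbering: node t has children 2t and 2t+1, so the nodes are
   1, ..., H - 1 and the leaves are [2^k, H).  Vertex 0 is the hub and vertex
   1 + (2b + s) H + t is node t of the down (s = 0) or up (s = 1) tree of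
   block b < B; all other vertices are [Other] and only touch the hub. *)

Definition node_of (u : nat) : node :=
  if u is u'.+1 then
    let q := u' %/ H in let t := u' %% H in
    if (t == 0) || (B <= q %/ 2) then Other
    else if odd q then Up (q %/ 2) t else Down (q %/ 2) t
  else Hub.

Definition vertex_of (a : node) : nat :=
  match a with
  | Down b t => (2 * b * H + t).+1
  | Up b t => ((2 * b).+1 * H + t).+1
  | _ => 0
  end.

Definition valid_node (a : node) : bool :=
  match a with
  | Hub => true
  | Down b t | Up b t => (b < B) && (0 < t < H)
  | Other => false
  end.

Lemma node_of_vertex a : valid_node a -> node_of (vertex_of a) = a.
Proof.
case: a => [|b t|b t|] //= /andP[hb /andP[t0 tH]];
  rewrite divnMDl ?expn_gt0 // (divn_small tH) addn0 modnMDl (modn_small tH);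
  rewrite eqn0Ngt t0 /= ?oddS oddM /=.
- by rewrite mulKn // leqNgt hb.
- have -> : (2 * b).+1 %/ 2 = b by lia.
  by rewrite leqNgt hb.
Qed.

Lemma vertex_of_node u : valid_node (node_of u) -> vertex_of (node_of u) = u.
Proof.
case: u => [//|u] /=; set q := u %/ H; set t := u %% H.
have hu : u = q * H + t := divn_eq u H.
have hq : q = q %/ 2 * 2 + odd q by rewrite -modn2 -divn_eq.
case: ifP => // _; case: ifP => odd_q _ /=; rewrite odd_q /= in hq; lia.
Qed.

Lemma node_of_valid u : node_of u = Other \/ valid_node (node_of u).
Proof.
case: u => [|u] /=; [by right | case: ifP => [_|/norP[t0 hB]]; [by left | right]].
by case: ifP => _ /=; rewrite ltnNge hB lt0n t0 ltn_mod expn_gt0.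
Qed.

Hypothesis blocks_fit : B * 2 ^ k.+2 <= m.

Lemma vertex_of_le a : valid_node a -> vertex_of a <= m.
Proof.
have fit2 : 2 * B * H <= m by rewrite (leq_trans _ blocks_fit) // (expnS 2 k.+1); lia.
case: a => [|b t|b t|] //= /andP[hb /andP[_ tH]];
  have := leq_mul (leq_mul (leqnn 2) hb) (leqnn H); lia.
Qed.

Lemma valid_heap_node b x j : b < B -> heap_leaf k x -> j <= k ->
  valid_node (Down b (x %/ 2 ^ j)) && valid_node (Up b (x %/ 2 ^ j)).
Proof. by move=> hb hx hj; rewrite /= hb heap_leaf_divn_range. Qed.

Lemma valid_heap_leaf b x : b < B -> heap_leaf k x ->
  valid_node (Down b x) && valid_node (Up b x).
Proof. by move=> hb hx; have := valid_heap_node hb hx (leq0n k); rewrite divn1. Qed.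

Lemma valid_heap_root b : b < B -> valid_node (Down b 1) && valid_node (Up b 1).
Proof.
move=> hb; have := valid_heap_node hb (heap_leaf_pow2 k) (leqnn k).
by rewrite heap_leaf_root // heap_leaf_pow2.
Qed.

Definition vtx (a : node) : 'I_m.+1 := inord (vertex_of a).

Lemma node_of_vtx a : valid_node a -> node_of (vtx a) = a.
Proof. by move=> va; rewrite inordK ?node_of_vertex // ltnS vertex_of_le. Qed.

Lemma vtx_node_of (x : 'I_m.+1) : valid_node (node_of x) -> vtx (node_of x) = x.
Proof. by move=> vx; rewrite /vtx vertex_of_node // inord_val. Qed.

Variable S : nat -> nat -> nat -> bool.

Definition arc (a c : node) : bool :=
  match a, c with
  | Hub, Hub => false
  | Hub, Down _ t => t == 1
  | Hub, Up _ t => heap_leaf k t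
  | Hub, Other => true
  | _, Hub => true
  | Down b t, Down b' t' => (b' == b) && (t' %/ 2 == t)
  | Down b t, Up b' t' => [&& b' == b, heap_leaf k t, heap_leaf k t' & S b t t']
  | Up b t, Down b' _ => (b' == b) && (t == 1)
  | Up b t, Up b' t' => (b' == b) && ((t %/ 2 == t') || (t == 1) && (t' != 1))
  | _, _ => false
  end.

Definition code_graph : edgeset m.+1 :=
  [set x : 'I_m.+1 * 'I_m.+1 | arc (node_of x.1) (node_of x.2)].

Lemma code_graph_loopless : loopless code_graph.
Proof.
move=> x; rewrite inE /=; have [-> //|] := node_of_valid x.
case: (node_of x) => [|b t|b t|] //= /andP[_ /andP[t0 _]].
  by rewrite eqxx ltn_eqF // ltn_Pdiv.
by rewrite eqxx ltn_eqF ?ltn_Pdiv //= andbN.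
Qed.

Variables (b0 l v : nat).
Hypotheses (b0B : b0 < B) (leaf_l : heap_leaf k l) (leaf_v : heap_leaf k v).

Definition fault (a c : node) : bool :=
  match a, c with
  | Hub, Up b t => (b == b0) && (t == v)
  | Down b p, Down b' t =>
      [&& b == b0, b' == b0, t %/ 2 == p, heap_anc k p l & ~~ heap_anc k t l]
  | Up b t, Up b' p =>
      [&& b == b0, b' == b0, t %/ 2 == p, heap_anc k p v & ~~ heap_anc k t v]
  | _, _ => false
  end.

Definition query_faults : edgeset m.+1 :=
  [set x : 'I_m.+1 * 'I_m.+1 | fault (node_of x.1) (node_of x.2)].

Lemma fault_arc a c : fault a c -> arc a c.
Proof.
case: a c => [|b p|b p|] [|b' t|b' t|] //=; first by case/andP=> _ /eqP ->; apply: leaf_v.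
- by case/and5P=> /eqP -> /eqP -> -> _ _; rewrite eqxx.
- by case/and5P=> /eqP -> /eqP -> -> _ _; rewrite eqxx.
Qed.

Lemma query_faults_sub : query_faults \subset code_graph.
Proof. by apply/subsetP=> x; rewrite !inE; apply: fault_arc. Qed.

Lemma card_query_faults : #|query_faults| <= (2 * k).+1.
Proof.
pose sib_l i := sibling (l %/ 2 ^ i); pose sib_v i := sibling (v %/ 2 ^ i).
pose L := (vtx Hub, vtx (Up b0 v)) ::
  [seq (vtx (Down b0 (sib_l i %/ 2)), vtx (Down b0 (sib_l i))) | i <- iota 0 k] ++
  [seq (vtx (Up b0 (sib_v i)), vtx (Up b0 (sib_v i %/ 2))) | i <- iota 0 k].
apply: (@leq_trans (size L)); last by rewrite /= size_cat !size_map size_iota addnn -mul2n.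
apply: leq_trans (card_size L); apply: subset_leq_card; apply/subsetP => -[x y].
rewrite inE /= => fxy; rewrite inE mem_cat.
have [hx|vx] := node_of_valid x; first by rewrite hx in fxy.
have [hy|vy] := node_of_valid y; first by rewrite hy in fxy; case: (node_of x) fxy.
rewrite -(vtx_node_of vx) -(vtx_node_of vy).
move: vx vy fxy; case: (node_of x) => [|b p|b p|]; case: (node_of y) => [|b' c|b' c|] //=.
- by move=> _ _ /andP[/eqP -> /eqP ->]; rewrite eqxx.
- move=> _ /andP[_ c_range] /and5P[/eqP -> /eqP -> /eqP <- hp hc].
  have [i ik ->] := heap_anc_exit leaf_l c_range hp hc.
  by apply/orP; right; apply/orP; left; apply/mapP; exists i; rewrite ?mem_iota.
- move=> /andP[_ c_range] _ /and5P[/eqP -> /eqP -> /eqP <- hp hc].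
  have [i ik ->] := heap_anc_exit leaf_v c_range hp hc.
  by apply/orP; right; apply/orP; right; apply/mapP; exists i; rewrite ?mem_iota.
Qed.

Local Notation live := (erel (code_graph :\: query_faults)).

Lemma liveE x y : live x y = ~~ fault (node_of x) (node_of y) && arc (node_of x) (node_of y).
Proof. by rewrite /erel !inE. Qed.

Definition cut_side (a : node) : bool :=
  match a with
  | Down b t => (b == b0) && ~~ heap_anc k t l
  | Up b t => (b == b0) && heap_anc k t v
  | _ => false
  end.

Lemma cut_side_closed a c :
  ~~ S b0 l v -> ~~ fault a c -> arc a c -> cut_side c -> cut_side a.
Proof.
move=> nS; case: a c => [|b t|b t|] [|b' t'|b' t'|] //=.
- by move=> _ /eqP -> /andP[_]; rewrite heap_anc_root.
- move=> nf lt' /andP[eb ha].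
  by rewrite eb (heap_anc_leaf leaf_v lt' ha) eqxx in nf.
- move=> nf /andP[/eqP eb /eqP ht] /andP[/eqP eb0 hc]; subst b' t b.
  by rewrite eqxx /=; apply: contra nf => ha; rewrite ha hc !eqxx.
- move=> _ /and4P[/eqP eb lt lt' St] /andP[/eqP eb0 ha]; subst b' b.
  rewrite eqxx /=; apply: contraL St => hl.
  by rewrite (heap_anc_leaf leaf_l lt hl) (heap_anc_leaf leaf_v lt' ha).
- by move=> _ /andP[/eqP -> /eqP ->] /andP[-> _]; rewrite heap_anc_root.
- move=> nf /andP[/eqP eb ht] /andP[/eqP eb0 ha]; subst b' b.
  rewrite eqxx /=; case/orP: ht => [/eqP ht|/andP[/eqP -> _]]; last exact: heap_anc_root.
  by apply: contraR nf => nha; rewrite eqxx ht ha nha eqxx.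
Qed.

Lemma query_disconnects : ~~ S b0 l v -> ~ strongly_connected live.
Proof.
move=> nS /(_ (vtx Hub) (vtx (Up b0 v))) [n walk].
have closed x y : live x y -> cut_side (node_of y) -> cut_side (node_of x).
  by rewrite liveE => /andP[]; apply: cut_side_closed.
have := walk_in_closed closed walk.
have /andP[_ vv] := valid_heap_leaf b0B leaf_v.
rewrite (node_of_vtx vv) (node_of_vtx (a := Hub)) //.
by rewrite /cut_side eqxx heap_anc_refl => /(_ isT).
Qed.

Lemma connect_live a c : valid_node a -> valid_node c -> ~~ fault a c -> arc a c ->
  connect live (vtx a) (vtx c).
Proof. by move=> va vc nf ac; apply: connect1; rewrite liveE !node_of_vtx // nf. Qed.

Lemma connect_up_root b x : b < B -> heap_leaf k x -> (b != b0) || (x == v) ->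
  connect live (vtx (Up b x)) (vtx (Up b 1)).
Proof.
move=> hb hx hbx; suff up i : i <= k -> connect live (vtx (Up b x)) (vtx (Up b (x %/ 2 ^ i))).
  by rewrite -(heap_leaf_root hx); apply: up.
elim: i => [_|i IH ik]; first by rewrite divn1.
apply: connect_trans (IH (ltnW ik)) (connect_live _ _ _ _).
- by case/andP: (valid_heap_node hb hx (ltnW ik)).
- by case/andP: (valid_heap_node hb hx ik).
- case/orP: hbx => [nb|/eqP ->] /=; first by rewrite (negbTE nb).
  by rewrite (heap_anc_div _ (ltnW ik)) !andbF.
- by rewrite /= eqxx divn_exp2S eqxx.
Qed.

Lemma connect_root_down_l : connect live (vtx (Down b0 1)) (vtx (Down b0 l)).
Proof.
suff down i : i <= k -> connect live (vtx (Down b0 (l %/ 2 ^ i))) (vtx (Down b0 l)).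
  by rewrite -(heap_leaf_root leaf_l); apply: down.
elim: i => [_|i IH ik]; first by rewrite divn1.
apply: connect_trans (connect_live _ _ _ _) (IH (ltnW ik)).
- by case/andP: (valid_heap_node b0B leaf_l ik).
- by case/andP: (valid_heap_node b0B leaf_l (ltnW ik)).
- by rewrite /= (heap_anc_div _ (ltnW ik)) !andbF.
- by rewrite /= eqxx divn_exp2S eqxx.
Qed.

Lemma hub_reaches_up_root b : b < B -> S b0 l v -> connect live (vtx Hub) (vtx (Up b 1)).
Proof.
move=> hb Sb0lv; have [<-{b hb}|nb] := eqVneq b0 b.
  have /andP[vdown _] := valid_heap_root b0B.
  have /andP[vl _] := valid_heap_leaf b0B leaf_l.
  have /andP[_ vv] := valid_heap_leaf b0B leaf_v.
  apply: connect_trans (connect_live _ vdown _ _) _ => //=.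
  apply: connect_trans connect_root_down_l _.
  apply: connect_trans (connect_live vl vv _ _) _ => //=; first by rewrite eqxx leaf_l leaf_v.
  by apply: (connect_up_root b0B leaf_v); rewrite !eqxx orbT.
have /andP[_ vleaf] := valid_heap_leaf hb (heap_leaf_pow2 k).
apply: connect_trans (connect_live _ vleaf _ _) (connect_up_root hb (heap_leaf_pow2 k) _).
- by [].
- by rewrite /= eq_sym (negbTE nb).
- exact: heap_leaf_pow2.
- by rewrite eq_sym nb.
Qed.

Lemma hub_reaches a : S b0 l v -> valid_node a -> connect live (vtx Hub) (vtx a).
Proof.
move=> Sb0lv; case: a => [|b t|b t|] // va; have /andP[hb /andP[t0 _]] := va.
- have /andP[_ vroot] := valid_heap_root hb.
  apply: connect_trans (hub_reaches_up_root hb Sb0lv) (connect_live vroot va _ _) => //.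
  by rewrite /= eqxx.
- have [->|t1] := eqVneq t 1; first exact: hub_reaches_up_root.
  have /andP[_ vroot] := valid_heap_root hb.
  apply: connect_trans (hub_reaches_up_root hb Sb0lv) (connect_live vroot va _ _) => /=.
  + by rewrite divn_small // (eq_sym 0) eqn0Ngt t0 !andbF.
  + by rewrite eqxx t1 orbT.
Qed.

Lemma query_connects : S b0 l v -> strongly_connected live.
Proof.
move=> Sb0lv; apply: (@strongly_connected_hub _ _ (vtx Hub)) => x.
have [ox|vx] := node_of_valid x.
  by split; apply: connect1; rewrite liveE node_of_vtx // ox.
rewrite -(vtx_node_of vx); split; last exact: hub_reaches.
by case: (node_of x) vx => [|b t|b t|] // vx; apply: connect_live.
Qed.

End Construction.

Definition coded_triples k B (A : {set 'I_B * 'I_(2 ^ k) * 'I_(2 ^ k)}) b l v :=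
  [exists t in A, [&& t.1.1 == b :> nat, 2 ^ k + t.1.2 == l & 2 ^ k + t.2 == v]].

Lemma coded_triplesP k B (A : {set 'I_B * 'I_(2 ^ k) * 'I_(2 ^ k)})
    (t : 'I_B * 'I_(2 ^ k) * 'I_(2 ^ k)) :
  coded_triples A t.1.1 (2 ^ k + t.1.2) (2 ^ k + t.2) = (t \in A).
Proof.
apply/existsP/idP => [[s /and4P[sA /eqP e1 /eqP e2 /eqP e3]]|tA]; last first.
  by exists t; rewrite tA !eqxx.
suff -> : t = s by [].
case: t s e1 e2 e3 {sA} => [[b l] v] [[b' l'] v'] /= e1 e2 e3.
by congr (_, _, _); apply: val_inj => /=; lia.
Qed.

Lemma FDO_size_lower_bound (R : realFieldType) m k B f (sigma : R)
    (enc : edgeset m.+1 -> seq bool) q :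
  B * 2 ^ k.+2 <= m -> (2 * k).+1 <= f -> is_FDO f sigma enc q ->
  exists E : edgeset m.+1, loopless E /\ B * 2 ^ k * 2 ^ k <= 2 * size (enc E).
Proof.
move=> fit kf fdo.
pose G (A : {set 'I_B * 'I_(2 ^ k) * 'I_(2 ^ k)}) := code_graph k B m (coded_triples A).
have sep (A A' : {set _}) t : t \in A -> t \notin A' -> enc (G A) <> enc (G A').
  move=> tA tA'; have lf := heap_leafD (ltn_ord t.1.2); have lv := heap_leafD (ltn_ord t.2).
  apply: (FDO_separates (F := query_faults k B m t.1.1 (2 ^ k + t.1.2) (2 ^ k + t.2)) fdo).
  - exact: code_graph_loopless.
  - exact: code_graph_loopless.
  - exact: query_faults_sub.
  - exact: query_faults_sub.
  - exact: leq_trans (card_query_faults _ _ _ lf lv) kf.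
  - by apply: query_connects; rewrite ?coded_triplesP.
  - by apply: query_disconnects; rewrite ?coded_triplesP.
have inj_enc : injective (fun A => enc (G A)).
  move=> A A' encAA'; apply/setP => t; apply/idP/idP => tA; apply/negPn/negP => ntA.
  - exact: sep tA ntA encAA'.
  - exact: sep tA ntA (esym encAA').
have [A sizeA] := exists_long_code inj_enc.
by exists (G A); split; [apply: code_graph_loopless | move: sizeA; rewrite !card_prod !card_ord].
Qed.

Lemma exists_tree_height f n : 8 <= n ->
  exists k, [/\ k <= f, 2 ^ k.+3 <= n & k = f \/ n < 2 ^ k.+4].
Proof.
move=> n8; elim: f => [|f [k [kf kn [kf_eq|nk]]]]; first by exists 0; split => //; left.
- subst k; have [n_big|n_small] := leqP (2 ^ f.+4) n.
  + by exists f.+1; split => //; left.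
  + by exists f; split => //; right.
- by exists k; split => //; [apply: leqW | right].
Qed.

Lemma block_count_bound n k s : 2 ^ k.+3 <= n ->
  n %/ 2 ^ k.+3 * 2 ^ k * 2 ^ k <= 2 * s -> n * 2 ^ k <= 32 * s.
Proof.
move=> kn hs; have B1 : 1 <= n %/ 2 ^ k.+3 by rewrite leq_divRL ?expn_gt0 // mul1n.
have := ltn_ceil n (expn_gt0 2 k.+3); move: B1 hs.
rewrite !expnS; set X := 2 ^ k; set B := n %/ _; nia.
Qed.

Local Open Scope ring_scope.

Lemma scaled_square_bound (R : realFieldType) (C y x s : R) :
  0 < C -> 0 <= x -> 0 <= s ->
  y * x <= (64 * s) ^+ 2 \/ (y <= C ^+ 2 * x /\ x <= 512 * s) ->
  (64 + 512 * C)^-1 ^+ 2 * y * x <= s ^+ 2.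
Proof.
move=> C0 x0 s0 cases; have d0 : 0 < 64 + 512 * C by lra.
rewrite -mulrA exprVn ler_pdivrMl ?exprn_gt0 // -exprMn.
have le_sq (a b : R) : 0 <= a -> a <= b -> a ^+ 2 <= b ^+ 2.
  by move=> a0 ab; nra.
case: cases => [yx|[yC xs]].
  by apply: le_trans yx (le_sq _ _ _ _); nra.
apply: (@le_trans _ _ (C ^+ 2 * x ^+ 2)); first by rewrite expr2 mulrA ler_wpM2r.
apply: (@le_trans _ _ ((512 * C * s) ^+ 2)); last by apply: le_sq; nra.
have := le_sq _ _ x0 xs; have := sqr_ge0 C; nra.
Qed.

Lemma lower_bound_arith (C : rat) n f k s : 0 < C ->
  (2 ^ f)%:R <= C ^+ 2 * (n ^ 2)%:R -> (n * 2 ^ k <= 32 * s)%N ->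
  (f <= k.*2.+2 \/ n < 2 ^ k.+4)%N ->
  (64 + 512 * C)^-1 ^+ 2 * (2 ^ f)%:R * (n ^ 2)%:R <= (s ^ 2)%:R.
Proof.
move=> C0 fn ns k_cases; rewrite [X in _ <= X]natrX.
apply: scaled_square_bound; rewrite ?ler0n //.
case: k_cases => [fk|nk]; [left | right].
  have f4k : (2 ^ f <= 4 * (2 ^ k * 2 ^ k))%N.
    by rewrite -expnD (_ : 4 = 2 ^ 2)%N // -expnD leq_exp2l //; lia.
  rewrite -natrM -[64 * _]natrM -natrX ler_nat.
  have := leq_mul f4k (leqnn (n ^ 2)).
  have : ((n * 2 ^ k) ^ 2 <= (32 * s) ^ 2)%N by rewrite leq_exp2r.
  lia.
split; first exact: fn.
rewrite -[512 * _]natrM ler_nat.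
have := leq_mul (ltnW nk) (leqnn n); rewrite !expnS; lia.
Qed.

Theorem theorem4 :
  forall C : rat, 0 < C ->
  exists c : rat, 0 < c /\
  exists N : nat, forall n f : nat, (N <= n)%N -> (0 < f)%N ->
    (2 ^ f)%:R <= C ^+ 2 * (n ^ 2)%:R ->
    forall (R : realFieldType) (sigma : R)
           (enc : edgeset n -> seq bool) (q : seq bool -> edgeset n -> option R),
      1 <= sigma -> is_FDO f sigma enc q ->
      exists E : edgeset n, loopless E /\
        c ^+ 2 * (2 ^ f)%:R * (n ^ 2)%:R <= ((size (enc E)) ^ 2)%:R.
Proof.
move=> C C0; exists (64 + 512 * C)^-1; split; first by rewrite invr_gt0; lra.
exists 8%N => n f n8 f0 fn R sigma enc q _ fdo.
have [k [kf kn k_cases]] := exists_tree_height ((f.-1) %/ 2) n8.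
case: n n8 fn enc q fdo kn k_cases => [//|m] n8 fn enc q fdo kn k_cases.
set B := (m.+1 %/ 2 ^ k.+3)%N.
have fit : (B * 2 ^ k.+2 <= m)%N.
  by have := leq_trunc_div m.+1 (2 ^ k.+3); rewrite -/B expnS; lia.
have [|E [loopE sizeE]] := FDO_size_lower_bound fit _ fdo; first by lia.
exists E; split; first exact: loopE.
apply: (lower_bound_arith C0 fn (block_count_bound kn sizeE)).
by case: k_cases => [kf_eq|]; [left; lia | right].
Qed.
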